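(* Let $N\ge2$ and $0=x_0<x_1<\dots<x_N=1$, $I=[0,1]$, $I_i=[x_{i-1},x_i]$, $|I_i|=x_i-x_{i-1}$, $L_i(x)=x_{i-1}+|I_i|x$ for $i=1,\dots,N$. Let $\alpha_i,\beta_i,\gamma_i$ be reals with $|\alpha_i|<1$ and $|\beta_i|+|\gamma_i|<1$, let $p_i\in\mathrm{Lip}\,\lambda_i$ and $q_i\in\mathrm{Lip}\,\mu_i$ with $0<\lambda_i,\mu_i\le1$, and let $f_1,f_2:I\to\mathbb{R}$ be continuous with $f_1(L_i(x))=\alpha_if_1(x)+\beta_if_2(x)+p_i(x)$ and $f_2(L_i(x))=\gamma_if_2(x)+q_i(x)$ for all $x\in I$, $i=1,\dots,N$. Put $\lambda=\min_i\lambda_i$, $\mu=\min_i\mu_i$, $\Omega=\max_i |\alpha_i|/|I_i|^{\lambda}$, $\Gamma=\max_i|\gamma_i|/|I_i|^{\mu}$, $\Theta=\max_i|\alpha_i|/|I_i|^{\mu}$, and suppose $\Theta<1$. Then: (a) if $\Omega\ne1$ and $\Gamma\ne1$, there is $\delta\in(0,1]$ with $f_1\in\mathrm{Lip}\,\delta$; (b) if $\Omega=1$ or $\Gamma=1$, there is $\delta\in(0,1]$ with $\omega(f_1,t)=O(|t|^{\delta}\log|t|)$ as $t\to0$.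
   Context: $\mathrm{Lip}\,\delta$ denotes the class of functions $g$ on $I$ such that $|g(x)-g(y)|\le C|x-y|^{\delta}$ for some constant $C$ and all $x,y\in I$. $\omega(f_1,t)=\sup\{|f_1(x)-f_1(y)|: x,y\in I,\ |x-y|\le |t|\}$ is the modulus of continuity. The function $f_1$ is the coalescence hidden variable fractal interpolation function (CHFIF): $(f_1,f_2)$ is the continuous function whose graph is the attractor of the IFS $\omega_i(x,y,z)=(L_i(x),\alpha_iy+\beta_iz+p_i(x),\gamma_iz+q_i(x))$. *)

From Stdlib Require Import Reals.
From Coquelicot Require Import Coquelicot.
Open Scope R_scope.

(* real power with the convention 0^d = 0 (for d > 0); Rpower itself is
   only meaningful for a positive base *)
Definition rpow (x d : R) : R := if Rle_dec x 0 then 0 else Rpower x d.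

Definition inI (x : R) : Prop := 0 <= x <= 1.

Definition Lip (delta : R) (g : R -> R) : Prop :=
  exists C : R, forall x y, inI x -> inI y ->
    Rabs (g x - g y) <= C * rpow (Rabs (x - y)) delta.

Definition cont_on_I (g : R -> R) : Prop :=
  forall x, inI x -> forall eps, 0 < eps -> exists d, 0 < d /\
    forall y, inI y -> Rabs (y - x) < d -> Rabs (g y - g x) < eps.

Definition modcont (g : R -> R) (t : R) : Rbar :=
  Lub_Rbar (fun r => exists x y, inI x /\ inI y /\ Rabs (x - y) <= Rabs t /\
                                 r = Rabs (g x - g y)).

Fixpoint max_1N (f : nat -> R) (n : nat) : R :=
  match n with
  | O => f O
  | S O => f 1%nat
  | S m => Rmax (max_1N f m) (f n)
  end.
Fixpoint min_1N (f : nat -> R) (n : nat) : R :=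
  match n with
  | O => f O
  | S O => f 1%nat
  | S m => Rmin (min_1N f m) (f n)
  end.

From Stdlib Require Import Reals Lra Lia.
From Coquelicot Require Import Coquelicot.
Open Scope R_scope.

(* Let h be continuous on I with h (L_i u) = c_i h u + r_i u, where |c_i| <= g < 1 and the
   r_i are Hoelder. Take a <= min |I_i|: two points at distance <= a^(k+1) lie in one cell
   or in two adjacent ones. Inside one cell, pulling back through L_i multiplies distances
   by at most 1/a, so the oscillation of h at scale a^(k+1) is at most g times its
   oscillation at scale a^k plus O(a^(k e)); across a node one compares instead with the
   values at the fixed points 0 = L_1 0 and 1 = L_N 1. Hence the oscillation at scale a^k
   decays geometrically, which is Hoelder continuity. This applies to f2, and then to f1,
   whose perturbation beta_i f2 + p_i is now Hoelder. *)

Lemma rpow_nonneg x d : 0 <= rpow x d.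
Proof. unfold rpow; destruct Rle_dec; [lra | left; apply exp_pos]. Qed.

Lemma rpow_of_pos x d : 0 < x -> rpow x d = Rpower x d.
Proof. intros; unfold rpow; destruct Rle_dec; lra. Qed.

Lemma rpow_le_base x y d : 0 <= d -> 0 <= x <= y -> rpow x d <= rpow y d.
Proof.
  intros Hd [Hx Hxy]; destruct (Req_dec x 0) as [->|Hx0].
  - unfold rpow at 1; destruct Rle_dec; [apply rpow_nonneg | lra].
  - rewrite !rpow_of_pos by lra; apply Rle_Rpower_l; lra.
Qed.

Lemma rpow_le_exp x d d' : 0 <= x <= 1 -> d <= d' -> rpow x d' <= rpow x d.
Proof.
  intros Hx Hd; destruct (Req_dec x 0) as [->|Hx0].
  - unfold rpow; destruct Rle_dec; lra.
  - rewrite !rpow_of_pos by lra; unfold Rpower.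
    assert (Hln : ln x <= 0) by (rewrite <- ln_1; apply ln_le; lra).
    destruct (Req_dec (d' * ln x) (d * ln x)) as [->|Hne]; [lra|].
    left; apply exp_increasing; nra.
Qed.

Lemma Rpower_pow_base a e k : 0 < a -> Rpower (a ^ k) e = Rpower a e ^ k.
Proof.
  intros Ha; rewrite <- (Rpower_pow k (Rpower a e)) by (unfold Rpower; apply exp_pos).
  rewrite Rpower_mult; unfold Rpower; rewrite ln_pow by lra; f_equal; ring.
Qed.

Lemma rpow_le_pow_scale s a e k :
  0 < a -> 0 <= e -> 0 <= s <= a ^ k -> rpow s e <= Rpower a e ^ k.
Proof.
  intros Ha He Hs; rewrite <- Rpower_pow_base, <- rpow_of_pos by (try apply pow_lt; lra).
  now apply rpow_le_base.
Qed.

Lemma min_1N_attained f n :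
  (1 <= n)%nat -> exists i, (1 <= i <= n)%nat /\ min_1N f n = f i.
Proof.
  induction n as [|n IH]; intros Hn; [lia|].
  destruct n as [|n]; [exists 1%nat; split; [lia | reflexivity]|].
  change (min_1N f (S (S n))) with (Rmin (min_1N f (S n)) (f (S (S n)))).
  destruct (IH ltac:(lia)) as [i [Hi ->]].
  unfold Rmin; destruct Rle_dec; [exists i | exists (S (S n))]; split; auto; lia.
Qed.

Lemma min_1N_le f n i : (1 <= i <= n)%nat -> min_1N f n <= f i.
Proof.
  induction n as [|n IH]; intros Hi; [lia|].
  destruct n as [|n]; [replace i with 1%nat by lia; simpl; lra|].
  change (min_1N f (S (S n))) with (Rmin (min_1N f (S n)) (f (S (S n)))).
  destruct (Nat.eq_dec i (S (S n))) as [->|]; [apply Rmin_r|].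
  eapply Rle_trans; [apply Rmin_l | apply IH; lia].
Qed.

Lemma min_1N_pos f n :
  (1 <= n)%nat -> (forall i, (1 <= i <= n)%nat -> 0 < f i) -> 0 < min_1N f n.
Proof. intros Hn Hf; destruct (min_1N_attained f n Hn) as [i [Hi ->]]; auto. Qed.

Lemma max_1N_attained f n :
  (1 <= n)%nat -> exists i, (1 <= i <= n)%nat /\ max_1N f n = f i.
Proof.
  induction n as [|n IH]; intros Hn; [lia|].
  destruct n as [|n]; [exists 1%nat; split; [lia | reflexivity]|].
  change (max_1N f (S (S n))) with (Rmax (max_1N f (S n)) (f (S (S n)))).
  destruct (IH ltac:(lia)) as [i [Hi ->]].
  unfold Rmax; destruct Rle_dec; [exists (S (S n)) | exists i]; split; auto; lia.
Qed.

Lemma max_1N_ge f n i : (1 <= i <= n)%nat -> f i <= max_1N f n.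
Proof.
  induction n as [|n IH]; intros Hi; [lia|].
  destruct n as [|n]; [replace i with 1%nat by lia; simpl; lra|].
  change (max_1N f (S (S n))) with (Rmax (max_1N f (S n)) (f (S (S n)))).
  destruct (Nat.eq_dec i (S (S n))) as [->|]; [apply Rmax_r|].
  eapply Rle_trans; [apply IH; lia | apply Rmax_l].
Qed.

Lemma inI_dist x y : inI x -> inI y -> 0 <= Rabs (x - y) <= 1.
Proof. unfold inI, Rabs; intros; destruct Rcase_abs; lra. Qed.

Lemma Lip_nonneg_const d g :
  Lip d g -> exists C, 0 <= C /\
    forall x y, inI x -> inI y -> Rabs (g x - g y) <= C * rpow (Rabs (x - y)) d.
Proof.
  intros [C HC]; exists (Rmax C 0); split; [apply Rmax_r|].
  intros x y Hx Hy; eapply Rle_trans; [now apply HC|].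
  apply Rmult_le_compat_r; [apply rpow_nonneg | apply Rmax_l].
Qed.

Lemma Lip_weaken d d' g : d' <= d -> Lip d g -> Lip d' g.
Proof.
  intros Hd HL; destruct (Lip_nonneg_const d g HL) as [C [HC0 HC]].
  exists C; intros x y Hx Hy; eapply Rle_trans; [now apply HC|].
  apply Rmult_le_compat_l; [lra|]; apply rpow_le_exp; [now apply inI_dist | lra].
Qed.

Lemma Lip_lincomb d b g h : Lip d g -> Lip d h -> Lip d (fun x => b * g x + h x).
Proof.
  intros Hg Hh.
  destruct (Lip_nonneg_const d g Hg) as [Cg [_ HCg]], (Lip_nonneg_const d h Hh) as [Ch [_ HCh]].
  exists (Rabs b * Cg + Ch); intros x y Hx Hy.
  replace (b * g x + h x - (b * g y + h y)) with (b * (g x - g y) + (h x - h y)) by ring.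
  eapply Rle_trans; [apply Rabs_triang|]; rewrite Rabs_mult.
  pose proof (HCg x y Hx Hy); pose proof (HCh x y Hx Hy); pose proof (Rabs_pos b).
  pose proof (Rabs_pos (g x - g y)); nra.
Qed.

Lemma Lip_uniform d (g : nat -> R -> R) n :
  (forall i, (1 <= i <= n)%nat -> Lip d (g i)) ->
  exists C, 0 <= C /\ forall i x y, (1 <= i <= n)%nat -> inI x -> inI y ->
    Rabs (g i x - g i y) <= C * rpow (Rabs (x - y)) d.
Proof.
  induction n as [|n IH]; intros HL; [exists 0; split; [lra | intros; lia]|].
  destruct IH as [C [HC0 HC]]; [intros; apply HL; lia|].
  destruct (Lip_nonneg_const d (g (S n))) as [Cn [_ HCn]]; [apply HL; lia|].
  exists (Rmax C Cn); split; [eapply Rle_trans; [|apply Rmax_l]; lra|].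
  intros i x y Hi Hx Hy; pose proof (rpow_nonneg (Rabs (x - y)) d).
  destruct (Nat.eq_dec i (S n)) as [->|].
  - eapply Rle_trans; [now apply HCn|]; apply Rmult_le_compat_r; [lra | apply Rmax_r].
  - eapply Rle_trans; [apply HC; auto; lia|]; apply Rmult_le_compat_r; [lra | apply Rmax_l].
Qed.

Lemma Lip_modcont_log_bound d g :
  0 <= d -> Lip d g -> exists C t0, 0 < t0 /\ forall t, 0 < Rabs t < t0 ->
    Rbar_le (modcont g t) (Finite (C * Rabs (rpow (Rabs t) d * ln (Rabs t)))).
Proof.
  intros Hd HL; destruct (Lip_nonneg_const d g HL) as [C [HC0 HC]].
  exists C, (exp (-1)); split; [apply exp_pos|]; intros t [Ht0 Ht1].
  assert (Hln : ln (Rabs t) < -1) by (rewrite <- (ln_exp (-1)); apply ln_increasing; lra).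
  apply (proj2 (Lub_Rbar_correct _)); intros r [x [y [Hx [Hy [Hxy ->]]]]]; simpl.
  eapply Rle_trans; [now apply HC|].
  rewrite Rabs_mult, (Rabs_pos_eq (rpow _ _)) by apply rpow_nonneg.
  rewrite (Rabs_left (ln _)) by lra.
  pose proof (rpow_le_base (Rabs (x - y)) (Rabs t) d Hd (conj (Rabs_pos _) Hxy)).
  pose proof (rpow_nonneg (Rabs t) d).
  apply Rmult_le_compat_l; nra.
Qed.

(* [continuity_ab_maj] needs two-sided continuity at the endpoints, hence the clamping. *)
Definition clamp01 (x : R) : R := Rmax 0 (Rmin 1 x).

Lemma clamp01_inI x : inI (clamp01 x).
Proof. unfold clamp01, inI, Rmax, Rmin; repeat destruct Rle_dec; lra. Qed.

Lemma clamp01_id x : inI x -> clamp01 x = x.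
Proof. unfold clamp01, inI, Rmax, Rmin; intros; repeat destruct Rle_dec; lra. Qed.

Lemma clamp01_dist x y : Rabs (clamp01 x - clamp01 y) <= Rabs (x - y).
Proof.
  unfold clamp01, Rmax, Rmin; repeat destruct Rle_dec; unfold Rabs;
    repeat destruct Rcase_abs; lra.
Qed.

Lemma cont_on_I_bounded_osc h :
  cont_on_I h -> exists B, forall x y, inI x -> inI y -> Rabs (h x - h y) <= B.
Proof.
  intros Hh; set (m := fun x => Rabs (h (clamp01 x))).
  assert (Hm : forall x, 0 <= x <= 1 -> continuity_pt m x).
  { intros x _ eps Heps.
    destruct (Hh (clamp01 x) (clamp01_inI x) eps Heps) as [d [Hd Hdx]].
    exists d; split; [lra|]; intros y [_ Hy]; simpl in *; unfold R_dist in *.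
    eapply Rle_lt_trans; [apply Rabs_triang_inv2|].
    apply Hdx; [apply clamp01_inI | eapply Rle_lt_trans; [apply clamp01_dist | exact Hy]]. }
  destruct (continuity_ab_maj m 0 1 ltac:(lra) Hm) as [z [Hz _]].
  exists (2 * m z); intros x y Hx Hy.
  pose proof (Hz x Hx); pose proof (Hz y Hy); unfold m in *; rewrite !clamp01_id in * by auto.
  pose proof (Rabs_triang (h x) (- h y)); rewrite Rabs_Ropp in *; unfold Rminus; lra.
Qed.

Definition cell_map (xs : nat -> R) (i : nat) (u : R) : R :=
  xs (i - 1)%nat + (xs i - xs (i - 1)%nat) * u.

Lemma cell_map_dist xs i u v : xs (i - 1)%nat <= xs i ->
  Rabs (cell_map xs i u - cell_map xs i v) = (xs i - xs (i - 1)%nat) * Rabs (u - v).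
Proof.
  intros Hi; unfold cell_map.
  replace (_ - _) with ((xs i - xs (i - 1)%nat) * (u - v)) by ring.
  rewrite Rabs_mult, Rabs_pos_eq; lra.
Qed.

Lemma cell_map_preimage xs i x : xs (i - 1)%nat < xs i -> xs (i - 1)%nat <= x <= xs i ->
  exists u, inI u /\ x = cell_map xs i u.
Proof.
  intros Hi Hx; set (l := xs i - xs (i - 1)%nat).
  exists ((x - xs (i - 1)%nat) / l).
  assert (Hu : x - xs (i - 1)%nat = l * ((x - xs (i - 1)%nat) / l)) by (field; unfold l; lra).
  split; [unfold inI, l in *; split; nra | unfold cell_map; fold l; lra].
Qed.

Lemma cell_cover xs n x : (1 <= n)%nat -> xs 0%nat <= x <= xs n ->
  exists i, (1 <= i <= n)%nat /\ xs (i - 1)%nat <= x <= xs i.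
Proof.
  induction n as [|n IH]; intros Hn Hx; [lia|].
  destruct (Nat.eq_dec n 0) as [->|Hn0]; [exists 1%nat; split; [lia | exact Hx]|].
  destruct (Rle_dec x (xs n)).
  - destruct IH as [i [Hi Hxi]]; [lia | lra | exists i; split; [lia | exact Hxi]].
  - exists (S n); split; [lia|]; replace (S n - 1)%nat with n by lia; lra.
Qed.

Lemma contraction_step g th rho R0 K M k :
  0 <= g -> 0 <= rho <= th -> 0 <= R0 <= K * (th - g) -> 0 <= M <= K * th ^ k ->
  g * M + R0 * rho ^ k <= K * th ^ S k.
Proof.
  intros Hg Hrho HR0 HM; simpl.
  pose proof (pow_incr rho th k Hrho); pose proof (pow_le rho k ltac:(lra)).
  assert (g * M <= g * (K * th ^ k)) by (apply Rmult_le_compat_l; lra).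
  assert (R0 * rho ^ k <= R0 * th ^ k) by (apply Rmult_le_compat_l; lra).
  assert (R0 * th ^ k <= K * (th - g) * th ^ k) by (apply Rmult_le_compat_r; lra).
  nra.
Qed.

Section SelfAffineDecay.

Variables (N : nat) (xs c : nat -> R) (r : nat -> R -> R) (h : R -> R).
Variables (a g rho R0 B th K : R).

Hypothesis HN : (1 <= N)%nat.
Hypothesis Hx0 : xs 0%nat = 0.
Hypothesis HxN : xs N = 1.
Hypothesis Ha : 0 < a <= 1.
Hypothesis Hlen : forall i, (1 <= i <= N)%nat -> a <= xs i - xs (i - 1)%nat.
Hypothesis Hg : 0 <= g.
Hypothesis Hc : forall i, (1 <= i <= N)%nat -> Rabs (c i) <= g.
Hypothesis Hr : forall i k u v, (1 <= i <= N)%nat -> inI u -> inI v ->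
  Rabs (u - v) <= a ^ k -> Rabs (r i u - r i v) <= R0 * rho ^ k.
Hypothesis HB : forall x y, inI x -> inI y -> Rabs (h x - h y) <= B.
Hypothesis Hfe : forall i u, (1 <= i <= N)%nat -> inI u ->
  h (cell_map xs i u) = c i * h u + r i u.
Hypothesis Hrho : 0 <= rho <= th.
Hypothesis HR0 : 0 <= R0 <= K * (th - g).
Hypothesis HBK : B <= K.

Lemma cell_pos i : (1 <= i <= N)%nat -> xs (i - 1)%nat < xs i.
Proof. intros Hi; pose proof (Hlen i Hi); lra. Qed.

Lemma pow_S_le_base k : a ^ S k <= a.
Proof.
  pose proof (pow_incr a 1 k ltac:(lra)) as Hk; rewrite pow1 in Hk.
  simpl; pose proof (pow_le a k ltac:(lra)); nra.
Qed.

Lemma pullback_step i k u v : (1 <= i <= N)%nat -> inI u -> inI v ->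
  Rabs (cell_map xs i u - cell_map xs i v) <= a ^ S k ->
  Rabs (u - v) <= a ^ k /\
  Rabs (h (cell_map xs i u) - h (cell_map xs i v)) <= g * Rabs (h u - h v) + R0 * rho ^ k.
Proof.
  intros Hi Hu Hv Huv; rewrite cell_map_dist in Huv by (pose proof (cell_pos i Hi); lra).
  assert (Hk : Rabs (u - v) <= a ^ k).
  { pose proof (Hlen i Hi); pose proof (pow_le a k ltac:(lra)); pose proof (Rabs_pos (u - v)).
    simpl in Huv; nra. }
  split; [exact Hk|]; rewrite !Hfe by auto.
  replace (c i * h u + r i u - (c i * h v + r i v)) with (c i * (h u - h v) + (r i u - r i v))
    by ring.
  eapply Rle_trans; [apply Rabs_triang|]; rewrite Rabs_mult.
  pose proof (Hc i Hi); pose proof (Rabs_pos (h u - h v)); pose proof (Hr i k u v Hi Hu Hv Hk).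
  nra.
Qed.

(* A fixed point [z] of the cell map [j] is only ever compared with points of cell [j],
   so its decay needs no splitting and holds with constant [K]. *)
Lemma fixed_point_decay j z : (1 <= j <= N)%nat -> inI z -> cell_map xs j z = z ->
  (forall y, inI y -> Rabs (z - y) <= a -> xs (j - 1)%nat <= y <= xs j) ->
  forall k y, inI y -> Rabs (z - y) <= a ^ k -> Rabs (h z - h y) <= K * th ^ k.
Proof.
  intros Hj Hz Hfix Hnear k; induction k as [|k IH]; intros y Hy Hzy.
  - rewrite pow_O, Rmult_1_r; pose proof (HB z y Hz Hy); lra.
  - pose proof (pow_S_le_base k).
    destruct (cell_map_preimage xs j y (cell_pos j Hj) (Hnear y Hy ltac:(lra))) as [v [Hv ->]].
    rewrite <- Hfix in Hzy |- *.
    destruct (pullback_step j k z v Hj Hz Hv Hzy) as [Hk Hstep].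
    eapply Rle_trans; [exact Hstep|].
    apply contraction_step; auto; split; [apply Rabs_pos | now apply IH].
Qed.

Lemma left_end_decay k y : inI y -> Rabs (0 - y) <= a ^ k -> Rabs (h 0 - h y) <= K * th ^ k.
Proof.
  apply (fixed_point_decay 1); [lia | unfold inI; lra | unfold cell_map; simpl; rewrite Hx0; ring|].
  intros w Hw Hw0; pose proof (Hlen 1%nat ltac:(lia)); simpl in *; rewrite Hx0 in *.
  unfold inI, Rabs in *; destruct Rcase_abs; lra.
Qed.

Lemma right_end_decay k y : inI y -> Rabs (1 - y) <= a ^ k -> Rabs (h 1 - h y) <= K * th ^ k.
Proof.
  apply (fixed_point_decay N); [lia | unfold inI; lra | unfold cell_map; rewrite HxN; ring|].
  intros w Hw Hw0; pose proof (Hlen N ltac:(lia)); rewrite HxN in *.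
  unfold inI, Rabs in *; destruct Rcase_abs; lra.
Qed.

Lemma adjacent_cells_decay i k x y : (1 <= i < N)%nat ->
  xs (i - 1)%nat <= x <= xs i -> xs i <= y <= xs (S i) -> Rabs (x - y) <= a ^ S k ->
  Rabs (h x - h y) <= 2 * K * th ^ S k.
Proof.
  intros Hi Hx Hy Hxy; rewrite Rabs_minus_sym, Rabs_pos_eq in Hxy by lra.
  assert (Hi' : (1 <= S i <= N)%nat) by lia.
  destruct (cell_map_preimage xs i x (cell_pos i ltac:(lia)) Hx) as [u [Hu ->]].
  destruct (cell_map_preimage xs (S i) y (cell_pos (S i) Hi')) as [v [Hv ->]].
  { replace (S i - 1)%nat with i by lia; lra. }
  assert (H1 : cell_map xs i 1 = xs i) by (unfold cell_map; ring).
  assert (H0 : cell_map xs (S i) 0 = xs i)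
    by (unfold cell_map; replace (S i - 1)%nat with i by lia; ring).
  assert (HI0 : inI 0) by (unfold inI; lra); assert (HI1 : inI 1) by (unfold inI; lra).
  destruct (pullback_step i k 1 u ltac:(lia) HI1 Hu) as [Hu1 Hleft].
  { rewrite H1, Rabs_pos_eq; lra. }
  destruct (pullback_step (S i) k 0 v Hi' HI0 Hv) as [Hv0 Hright].
  { rewrite H0, Rabs_left1; lra. }
  rewrite H1 in Hleft; rewrite H0 in Hright.
  pose proof (contraction_step g th rho R0 K _ k Hg Hrho HR0
    (conj (Rabs_pos _) (right_end_decay k u Hu Hu1))).
  pose proof (contraction_step g th rho R0 K _ k Hg Hrho HR0
    (conj (Rabs_pos _) (left_end_decay k v Hv Hv0))).
  replace (h (cell_map xs i u) - h (cell_map xs (S i) v))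
    with (- (h (xs i) - h (cell_map xs i u)) + (h (xs i) - h (cell_map xs (S i) v))) by ring.
  eapply Rle_trans; [apply Rabs_triang|]; rewrite Rabs_Ropp; lra.
Qed.

Lemma geometric_decay k x y : inI x -> inI y -> Rabs (x - y) <= a ^ k ->
  Rabs (h x - h y) <= 2 * K * th ^ k.
Proof.
  assert (HK : 0 <= K).
  { pose proof (HB 0 0); pose proof (Rabs_pos (h 0 - h 0)); unfold inI in *; lra. }
  revert x y; induction k as [|k IH].
  { intros x y Hx Hy _; rewrite pow_O; pose proof (HB x y Hx Hy); lra. }
  enough (Hle : forall x y, inI x -> inI y -> x <= y -> Rabs (x - y) <= a ^ S k ->
                  Rabs (h x - h y) <= 2 * K * th ^ S k).
  { intros x y Hx Hy Hxy; destruct (Rle_dec x y); [now apply Hle|].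
    rewrite Rabs_minus_sym in *; apply Hle; auto; lra. }
  intros x y Hx Hy Hxy Hd; pose proof (pow_S_le_base k).
  destruct (cell_cover xs N x HN ltac:(unfold inI in *; lra)) as [i [Hi Hxi]].
  destruct (Rle_dec y (xs i)).
  - destruct (cell_map_preimage xs i x (cell_pos i Hi) Hxi) as [u [Hu ->]].
    destruct (cell_map_preimage xs i y (cell_pos i Hi) ltac:(lra)) as [v [Hv ->]].
    destruct (pullback_step i k u v Hi Hu Hv Hd) as [Hk Hstep].
    eapply Rle_trans; [exact Hstep|].
    apply contraction_step; auto; [lra | split; [apply Rabs_pos | now apply IH]].
  - assert (HiN : (i < N)%nat).
    { destruct (Nat.eq_dec i N) as [->|]; [unfold inI in *; lra | lia]. }
    pose proof (Hlen (S i) ltac:(lia)); replace (S i - 1)%nat with i in * by lia.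
    rewrite Rabs_minus_sym, Rabs_pos_eq in Hd by lra.
    apply (adjacent_cells_decay i); [lia | lra | lra | rewrite Rabs_minus_sym, Rabs_pos_eq; lra].
Qed.

End SelfAffineDecay.

(* With [t = max th a = a ^ d], the bound [K th ^ n] at distance [a ^ n] becomes
   [(K / t) (a ^ (n + 1)) ^ d]. *)
Lemma Lip_of_geometric_decay h a th K : 0 < a < 1 -> 0 <= th < 1 -> 0 <= K ->
  (forall k x y, inI x -> inI y -> Rabs (x - y) <= a ^ k -> Rabs (h x - h y) <= K * th ^ k) ->
  exists d, 0 < d <= 1 /\ Lip d h.
Proof.
  intros Ha Hth HK Hdecay; set (t := Rmax th a).
  assert (Ht : th <= t /\ a <= t /\ t < 1)
    by (split; [apply Rmax_l | split; [apply Rmax_r | apply Rmax_lub_lt; lra]]).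
  assert (Hla : ln a < 0) by (rewrite <- ln_1; apply ln_increasing; lra).
  assert (Hlt : ln a <= ln t < 0)
    by (split; [apply ln_le | rewrite <- ln_1; apply ln_increasing]; lra).
  set (d := ln t / ln a).
  assert (Hdln : d * ln a = ln t) by (unfold d; field; lra).
  assert (Hd : 0 < d <= 1).
  { split; [destruct (Rle_lt_dec d 0) | destruct (Rle_lt_dec d 1)]; auto; nra. }
  assert (Had : Rpower a d = t) by (unfold Rpower; rewrite Hdln; apply exp_ln; lra).
  assert (HKt : 0 <= K / t) by (apply Rdiv_le_0_compat; lra).
  exists d; split; [exact Hd|]; exists (K / t).
  assert (Hscale : forall n x y, inI x -> inI y -> a ^ n < Rabs (x - y) ->
                     Rabs (h x - h y) <= K / t * rpow (Rabs (x - y)) d).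
  { induction n as [|n IH]; intros x y Hx Hy Hn.
    - pose proof (inI_dist x y Hx Hy); simpl in Hn; lra.
    - destruct (Rlt_le_dec (a ^ n) (Rabs (x - y))) as [Hfar|Hnear]; [now apply IH|].
      eapply Rle_trans; [apply Hdecay; eauto|].
      assert (Hpow : th ^ n <= t ^ n) by (apply pow_incr; lra).
      replace (K * th ^ n) with (K / t * (t * th ^ n)) by (field; lra).
      apply Rmult_le_compat_l; [exact HKt|].
      apply Rle_trans with (t ^ S n); [simpl; apply Rmult_le_compat_l; lra|].
      rewrite <- Had, <- Rpower_pow_base by lra.
      rewrite rpow_of_pos by (pose proof (pow_lt a (S n)); lra).
      apply Rle_Rpower_l; [lra | split; [apply pow_lt|]; lra]. }
  intros x y Hx Hy; destruct (Req_dec x y) as [->|Hxy].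
  - rewrite !Rminus_diag, Rabs_R0; pose proof (rpow_nonneg 0 d); nra.
  - assert (Hpos : 0 < Rabs (x - y)) by (apply Rabs_pos_lt; lra).
    destruct (pow_lt_1_zero a ltac:(rewrite Rabs_pos_eq; lra) _ Hpos) as [n Hn].
    specialize (Hn n (le_n _)); rewrite Rabs_pos_eq in Hn by (apply pow_le; lra).
    eapply Hscale; eauto.
Qed.

Lemma self_affine_Lip N xs (c : nat -> R) (r : nat -> R -> R) h e :
  (1 <= N)%nat -> xs 0%nat = 0 -> xs N = 1 ->
  (forall i, (1 <= i <= N)%nat -> xs (i - 1)%nat < xs i) ->
  (forall i, (1 <= i <= N)%nat -> Rabs (c i) < 1) ->
  0 < e -> (forall i, (1 <= i <= N)%nat -> Lip e (r i)) ->
  cont_on_I h ->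
  (forall i u, (1 <= i <= N)%nat -> inI u -> h (cell_map xs i u) = c i * h u + r i u) ->
  exists d, 0 < d <= 1 /\ Lip d h.
Proof.
  intros HN Hx0 HxN Hcell Hc He Hr Hh Hfe.
  set (len := fun i => xs i - xs (i - 1)%nat).
  set (a := Rmin (min_1N len N) (1 / 2)).
  assert (Ha : 0 < a < 1).
  { pose proof (min_1N_pos len N HN) as Hmin; pose proof (Rmin_r (min_1N len N) (1 / 2)).
    split; [apply Rmin_pos; [apply Hmin; intros i Hi; pose proof (Hcell i Hi); unfold len|]|];
      unfold a; lra. }
  assert (Hlen : forall i, (1 <= i <= N)%nat -> a <= xs i - xs (i - 1)%nat).
  { intros i Hi; eapply Rle_trans; [apply Rmin_l | apply (min_1N_le len); exact Hi]. }
  set (g := max_1N (fun i => Rabs (c i)) N).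
  assert (Hg : 0 <= g < 1).
  { destruct (max_1N_attained (fun i => Rabs (c i)) N HN) as [j [Hj Hmax]].
    pose proof (Hc j Hj); pose proof (Rabs_pos (c j)); unfold g; lra. }
  destruct (Lip_uniform e r N Hr) as [C [HC0 HC]].
  set (rho := Rpower a e).
  assert (Hrho : 0 < rho < 1).
  { assert (Hla : ln a < 0) by (rewrite <- ln_1; apply ln_increasing; lra).
    unfold rho, Rpower; split; [apply exp_pos | rewrite <- exp_0; apply exp_increasing; nra]. }
  destruct (cont_on_I_bounded_osc h Hh) as [B HB].
  set (th := (1 + Rmax g rho) / 2).
  set (K := Rmax B (C / (th - g))).
  assert (Hth : g < th /\ rho <= th /\ th < 1).
  { pose proof (Rmax_l g rho); pose proof (Rmax_r g rho).
    pose proof (Rmax_lub_lt g rho 1 ltac:(lra) ltac:(lra)); unfold th; lra. }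
  assert (HCK : C <= K * (th - g)).
  { unfold K; pose proof (Rmax_r B (C / (th - g))).
    replace C with (C / (th - g) * (th - g)) at 1 by (field; lra).
    apply Rmult_le_compat_r; lra. }
  apply (Lip_of_geometric_decay h a th (2 * K)); [lra | lra | |].
  { pose proof (HB 0 0); pose proof (Rabs_pos (h 0 - h 0)); pose proof (Rmax_l B (C / (th - g))).
    unfold inI, K in *; lra. }
  intros k x y Hx Hy Hxy.
  apply (geometric_decay N xs c r h a g rho C B th K); auto; try lra.
  - intros i Hi; unfold g; apply (max_1N_ge (fun i => Rabs (c i))); exact Hi.
  - intros i k' u v Hi Hu Hv Huv; eapply Rle_trans; [now apply HC|].
    apply Rmult_le_compat_l; [lra|].
    apply rpow_le_pow_scale; [lra | lra | split; [apply Rabs_pos | exact Huv]].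
  - apply Rmax_l.
Qed.

Theorem theorem3p1
  (N : nat) (xs : nat -> R)
  (alpha beta gamma lam mu : nat -> R) (p q : nat -> R -> R)
  (f1 f2 : R -> R) :
  (2 <= N)%nat ->
  xs 0%nat = 0 -> xs N = 1 ->
  (forall i, (1 <= i <= N)%nat -> xs (i - 1)%nat < xs i) ->
  (forall i, (1 <= i <= N)%nat ->
     Rabs (alpha i) < 1 /\ Rabs (beta i) + Rabs (gamma i) < 1 /\
     0 < lam i <= 1 /\ 0 < mu i <= 1 /\
     Lip (lam i) (p i) /\ Lip (mu i) (q i)) ->
  cont_on_I f1 -> cont_on_I f2 ->
  (forall i x, (1 <= i <= N)%nat -> inI x ->
     f1 (xs (i - 1)%nat + (xs i - xs (i - 1)%nat) * x)
       = alpha i * f1 x + beta i * f2 x + p i x /\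
     f2 (xs (i - 1)%nat + (xs i - xs (i - 1)%nat) * x)
       = gamma i * f2 x + q i x) ->
  let lenI := fun i => xs i - xs (i - 1)%nat in
  let lamm := min_1N lam N in
  let mu0 := min_1N mu N in
  let Omg := max_1N (fun i => Rabs (alpha i) / rpow (lenI i) lamm) N in
  let Gam := max_1N (fun i => Rabs (gamma i) / rpow (lenI i) mu0) N in
  let Tht := max_1N (fun i => Rabs (alpha i) / rpow (lenI i) mu0) N in
  Tht < 1 ->
  ((Omg <> 1 /\ Gam <> 1 ->
      exists delta, 0 < delta <= 1 /\ Lip delta f1) /\
   (Omg = 1 \/ Gam = 1 ->
      exists delta, 0 < delta <= 1 /\
        exists C t0, 0 < t0 /\ forall t, 0 < Rabs t < t0 ->
          Rbar_le (modcont f1 t)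
                  (Finite (C * Rabs (rpow (Rabs t) delta * ln (Rabs t)))))).
Proof.
  intros HN Hx0 HxN Hcell Hpar Hf1 Hf2 Hfe lenI lamm mu0 Omg Gam Tht _.
  assert (Hmu0 : 0 < mu0) by (apply min_1N_pos; [lia | intros i Hi; apply Hpar, Hi]).
  assert (Hlamm : 0 < lamm) by (apply min_1N_pos; [lia | intros i Hi; apply Hpar, Hi]).
  destruct (self_affine_Lip N xs gamma q f2 mu0) as [d2 [Hd2 Hf2Lip]]; auto; try lia.
  { intros i Hi; destruct (Hpar i Hi) as [_ [Hbg _]]; pose proof (Rabs_pos (beta i)); lra. }
  { intros i Hi; apply (Lip_weaken (mu i)); [now apply min_1N_le | apply Hpar, Hi]. }
  { intros i u Hi Hu; apply (Hfe i u Hi Hu). }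
  destruct (self_affine_Lip N xs alpha (fun i x => beta i * f2 x + p i x) f1 (Rmin d2 lamm))
    as [d1 [Hd1 Hf1Lip]]; auto; try lia.
  { intros i Hi; apply Hpar, Hi. }
  { apply Rmin_pos; lra. }
  { intros i Hi; apply Lip_lincomb; [apply (Lip_weaken d2); [apply Rmin_l | exact Hf2Lip]|].
    apply (Lip_weaken (lam i)); [|apply Hpar, Hi].
    eapply Rle_trans; [apply Rmin_r | now apply min_1N_le]. }
  { intros i u Hi Hu; unfold cell_map; rewrite (proj1 (Hfe i u Hi Hu)); ring. }
  split; intros _; exists d1; split; auto.
  apply Lip_modcont_log_bound; [lra | exact Hf1Lip].
Qed.
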